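(* Let $(S,E,f)$ be a reduced and closed observation table for $U$ and $D$ as defined below. If $|S|=\mathit{Ind}(\sim_{U,D})$, then $\mathcal{T}_{S,f}$ is isomorphic to $\mathcal{T}_{U,D}$.
   Context: $\Sigma$ is a finite alphabet, $U\subseteq\Sigma^\omega$ an $\omega$-language recognizable by a weak deterministic Büchi automaton, and $D\subseteq\Sigma^\omega$ a regular set with trivial right-congruence (i.e. for all $w\in\Sigma^*,\alpha\in\Sigma^\omega$: $\alpha\in D\iff w\alpha\in D$). $w\sim_{U,D}w'$ iff for all $\alpha\in\Sigma^\omega\setminus D$: $w\alpha\in U\iff w'\alpha\in U$; it is a right-congruence, $\mathit{Ind}(\sim_{U,D})$ is its number of classes, and $\mathcal{T}_{U,D}$ is its induced transition system (states the classes $[u]$, initial $[\epsilon]$, transitions $[u]\xrightarrow{\sigma}[u\sigma]$). An observation table $(S,E,f)$ consists of a prefix-closed finite $S\subseteq\Sigma^*$, a suffix-closed finite set $E$ of ultimately periodic words with $E\cap D=\emptyset$, and $f:(S\cup S\Sigma)\times E\to\{\text{yes},\text{no}\}$ with $f(s,\alpha)=\text{yes}$ iff $s\alpha\in U$. For $s\in S\cup S\Sigma$ let $f_s:E\to\{\text{yes},\text{no}\}$, $f_s(\alpha)=f(s,\alpha)$. The table is reduced if $f_s\neq f_t$ for distinct $s,t\in S$, and closed if for every $s\in S\Sigma$ there is $t\in S$ with $f_s=f_t$. For a reduced closed table, $\mathcal{T}_{S,f}=(\Sigma,S,\delta_f,\epsilon)$ with $\delta_f(s,\sigma)$ the unique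 $t\in S$ with $f_{s\sigma}=f_t$. *)

From mathcomp Require Import all_boot.
From Stdlib Require Import ClassicalEpsilon.
From Stdlib Require List.
Notation In := List.In.
Set Implicit Arguments.
Unset Strict Implicit.
Unset Printing Implicit Defensive.

Section Omega.
Variable Sigma : finType.

Definition oword := nat -> Sigma.

Definition wcat (w : seq Sigma) (a : oword) : oword :=
  fun n => if n < size w then nth (a 0) w n else a (n - size w).

Definition inf_often (P : nat -> Prop) := forall N, exists n, N <= n /\ P n.

Record DBA := { dQ : finType; dq0 : dQ; dd : dQ -> Sigma -> dQ; dF : pred dQ }.
Arguments dq0 : clear implicits. Arguments dd : clear implicits. Arguments dF : clear implicits.

Fixpoint drun (A : DBA) (a : oword) (n : nat) : dQ A :=
  match n with 0 => dq0 A | n'.+1 => dd A (drun A a n') (a n') end.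

Definition dba_lang (A : DBA) (a : oword) : Prop :=
  inf_often (fun n => dF A (drun A a n)).

(** weak: every strongly connected component is entirely accepting or
    entirely rejecting *)
Definition dba_weak (A : DBA) : Prop :=
  forall q q' : dQ A,
    (exists w, foldl (dd A) q w = q') -> (exists w, foldl (dd A) q' w = q) ->
    dF A q = dF A q'.

Definition weak_det_buchi_recognizable (L : oword -> Prop) : Prop :=
  exists A : DBA, dba_weak A /\ forall a, L a <-> dba_lang A a.

Record NBA := { nQ : finType; nI : pred nQ; nd : nQ -> Sigma -> pred nQ; nF : pred nQ }.
Arguments nI : clear implicits. Arguments nd : clear implicits. Arguments nF : clear implicits.

Definition nba_lang (A : NBA) (a : oword) : Prop :=
  exists r : nat -> nQ A,
    nI A (r 0) /\ (forall n, nd A (r n) (a n) (r n.+1)) /\ inf_often (fun n => nF A (r n)).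

Definition omega_regular (L : oword -> Prop) : Prop :=
  exists A : NBA, forall a, L a <-> nba_lang A a.

Definition trivial_rc (D : oword -> Prop) : Prop :=
  forall w a, D a <-> D (wcat w a).

Definition sim (U D : oword -> Prop) (w w' : seq Sigma) : Prop :=
  forall a, ~ D a -> (U (wcat w a) <-> U (wcat w' a)).

Definition cls (U D : oword -> Prop) (u : seq Sigma) : seq Sigma -> Prop :=
  fun w => sim U D w u.

Definition index_is (R : seq Sigma -> seq Sigma -> Prop) (n : nat) : Prop :=
  exists c : seq Sigma -> 'I_n,
    (forall w w', c w = c w' <-> R w w') /\ (forall i, exists w, c w = i).

Definition ult_periodic (a : oword) : Prop :=
  exists k p, 0 < p /\ forall n, k <= n -> a (n + p) = a n.

(** observation table (S,E,f) for U and D; the finite set S is given as a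
    duplicate-free list, E as a list of omega-words. *)
Definition obs_table (U D : oword -> Prop) (S : seq (seq Sigma)) (E : list oword)
    (f : seq Sigma -> oword -> bool) : Prop :=
  uniq S /\
  [/\ (forall s, s \in S -> forall k, take k s \in S),
      (forall a, In a E -> ult_periodic a),
      (forall a, In a E -> forall k, exists b, In b E /\ forall n, b n = a (k + n)),
      (forall a, In a E -> ~ D a) &
      (forall s a, (s \in S \/ exists s' x, s' \in S /\ s = rcons s' x) -> In a E ->
         (f s a = true <-> U (wcat s a)))].

Definition row_eq (E : list oword) (f : seq Sigma -> oword -> bool) (s t : seq Sigma) :=
  forall a, In a E -> f s a = f t a.

Definition obs_reduced (S : seq (seq Sigma)) E f : Prop :=
  forall s t, s \in S -> t \in S -> s <> t -> ~ row_eq E f s t.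

Definition obs_closed (S : seq (seq Sigma)) E f : Prop :=
  forall s x, s \in S -> exists t, t \in S /\ row_eq E f (rcons s x) t.

(** transition systems: states are the elements of Q satisfying tstate *)
Record TS := { tQ : Type; tstate : tQ -> Prop; tinit : tQ; ttrans : tQ -> Sigma -> tQ }.

Definition ts_iso (A B : TS) : Prop :=
  exists h : tQ A -> tQ B,
    [/\ (forall a, tstate a -> tstate (h a)),
        (forall a a', tstate a -> tstate a' -> h a = h a' -> a = a'),
        (forall b, tstate b -> exists a, tstate a /\ h a = b),
        h (tinit A) = tinit B &
        (forall a x, tstate a -> h (ttrans a x) = ttrans (h a) x)].

(** delta_f(s,x) = the (unique, for reduced closed tables) t in S with f_{sx} = f_t *)
Definition delta_f (S : seq (seq Sigma)) (E : list oword) (f : seq Sigma -> oword -> bool)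
    (s : seq Sigma) (x : Sigma) : seq Sigma :=
  nth [::] S (find (fun t => all (fun a => f t a == f (rcons s x) a) E) S).

Definition T_Sf S E f : TS :=
  {| tQ := seq Sigma; tstate := fun s => s \in S; tinit := [::]; ttrans := delta_f S E f |}.

Definition repr_cls (U D : oword -> Prop) (C : seq Sigma -> Prop) : seq Sigma :=
  epsilon (inhabits [::]) (fun u => C = cls U D u).

Definition T_UD (U D : oword -> Prop) : TS :=
  {| tQ := seq Sigma -> Prop;
     tstate := fun C => exists u, C = cls U D u;
     tinit := cls U D [::];
     ttrans := fun C x => cls U D (rcons (repr_cls U D C) x) |}.

End Omega.

From mathcomp Require Import all_boot.
From Stdlib Require Import ClassicalEpsilon FunctionalExtensionality PropExtensionality.
From Stdlib Require List.
Set Implicit Arguments.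
Unset Strict Implicit.

(* Words that are ~_{U,D}-equivalent have equal rows, because the columns E
   avoid D; distinct rows of S differ since the table is reduced.  Hence
   s |-> [s] is injective on S, and bijective onto the classes because
   |S| = Ind(~_{U,D}).  Finally delta_f(s,x) and the representative in S of
   [sx] both have the row of sx, so reducedness makes them equal. *)

Section Congruence.
Variables (Sigma : finType) (U D : oword Sigma -> Prop).

Lemma sim_refl w : sim U D w w.
Proof. by []. Qed.

Lemma sim_sym w w' : sim U D w w' -> sim U D w' w.
Proof. by move=> H a Da; apply: iff_sym; apply: H. Qed.

Lemma sim_trans w1 w2 w3 : sim U D w1 w2 -> sim U D w2 w3 -> sim U D w1 w3.
Proof. by move=> H1 H2 a Da; apply: iff_trans (H1 a Da) (H2 a Da). Qed.

Lemma cls_eqP s u : cls U D s = cls U D u <-> sim U D s u.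
Proof.
split=> [Esu | Hsu].
  by have : cls U D s s := sim_refl s; rewrite Esu.
apply: functional_extensionality => w; apply: propositional_extensionality.
by split=> Hw; [apply: sim_trans Hw Hsu | apply: sim_trans Hw (sim_sym Hsu)].
Qed.

Lemma repr_clsP s : sim U D (repr_cls U D (cls U D s)) s.
Proof.
apply/sim_sym/cls_eqP.
by apply: (epsilon_spec (inhabits [::]) (fun u => cls U D s = cls U D u)); exists s.
Qed.

Lemma wcat_rcons (s : seq Sigma) x (a : oword Sigma) :
  wcat (rcons s x) a = wcat s (wcat [:: x] a).
Proof.
apply: functional_extensionality => n; rewrite /wcat size_rcons /= nth_rcons.
case: (ltngtP n (size s)) => [lt_ns | gt_ns | ->]; last by rewrite ltnSn subnn.
- by rewrite ltnW //; apply: set_nth_default.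
- by rewrite ltnNge gt_ns ltnNge subn_gt0 gt_ns -subnDA addn1.
Qed.

Hypothesis D_trivial : trivial_rc D.

Lemma sim_rcons s t x : sim U D s t -> sim U D (rcons s x) (rcons t x).
Proof.
move=> Hst a Da; rewrite !wcat_rcons; apply: Hst => Dxa; apply: Da.
exact/(D_trivial [:: x] a).
Qed.

End Congruence.

Lemma row_eq_sym (Sigma : finType) E (f : seq Sigma -> oword Sigma -> bool) s t :
  row_eq E f s t -> row_eq E f t s.
Proof. by move=> Est a Ea; rewrite Est. Qed.

Lemma delta_fP (Sigma : finType) (S : seq (seq Sigma)) E f s x :
  obs_closed S E f -> s \in S ->
  delta_f S E f s x \in S /\ row_eq E f (delta_f S E f s x) (rcons s x).
Proof.
move=> closedS Ss.
pose p t := List.forallb (fun a => f t a == f (rcons s x) a) E.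
have row_eq_p t : row_eq E f t (rcons s x) <-> p t.
  split=> [H | /List.forallb_forall H]; last by move=> a /H /eqP.
  by apply/List.forallb_forall => a /H /eqP.
have has_p : has p S.
  have [t [St /row_eq_sym Et]] := closedS s x Ss.
  by apply/hasP; exists t => //; apply/row_eq_p.
split; first by rewrite /delta_f mem_nth // -has_find.
exact/row_eq_p/(nth_find [::] has_p).
Qed.

Lemma mem_uniq_map_ord (T : eqType) n (c : T -> 'I_n) (s : seq T) :
  uniq (map c s) -> size s = n -> forall i, i \in map c s.
Proof.
move=> uniq_cs size_s i.
have card_cs : #|[in map c s]| = #|'I_n| by rewrite card_ord (card_uniqP uniq_cs) size_map.
by rewrite ((subset_cardP card_cs (subset_predT _)) i).
Qed.

Section ObservationTable.
Variables (Sigma : finType) (U D : oword Sigma -> Prop).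
Variables (S : seq (seq Sigma)) (E : list (oword Sigma)) (f : seq Sigma -> oword Sigma -> bool).
Hypotheses (tableS : obs_table U D S E f) (reducedS : obs_reduced S E f).

Lemma sim_row_eq s t :
  (s \in S \/ exists s' x, s' \in S /\ s = rcons s' x) ->
  (t \in S \/ exists t' x, t' \in S /\ t = rcons t' x) ->
  sim U D s t -> row_eq E f s t.
Proof.
have [_ [_ _ _ E_notD f_U]] := tableS.
move=> rowS rowT Hst a Ea; have Da := E_notD a Ea.
apply/idP/idP => [/(f_U s a rowS Ea) | /(f_U t a rowT Ea)] HU.
- by apply/(f_U t a rowT Ea)/(Hst a Da).
- by apply/(f_U s a rowS Ea)/(Hst a Da).
Qed.

Lemma sim_inj_in s t : s \in S -> t \in S -> sim U D s t -> s = t.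
Proof.
move=> Ss St Hst; case: (eqVneq s t) => // /eqP ne_st.
by case: (reducedS Ss St ne_st); apply: sim_row_eq; [left | left |].
Qed.

Hypothesis indexS : index_is (sim U D) (size S).

Lemma exists_sim_in s : exists2 t, t \in S & sim U D t s.
Proof.
have [c [c_sim _]] := indexS.
have uniq_cS : uniq (map c S).
  rewrite map_inj_in_uniq; first by case: tableS.
  by move=> t t' St St' /c_sim; apply: sim_inj_in.
have /mapP [t St /esym /c_sim] := mem_uniq_map_ord uniq_cS (erefl _) (c s).
by exists t.
Qed.

Hypothesis closedS : obs_closed S E f.

Lemma delta_f_sim s x : s \in S -> sim U D (delta_f S E f s x) (rcons s x).
Proof.
move=> Ss; have [St Est] := delta_fP x closedS Ss.
have [t' St' Ht'] := exists_sim_in (rcons s x).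
suff -> : delta_f S E f s x = t' by [].
case: (eqVneq (delta_f S E f s x) t') => // /eqP ne; case: (reducedS St St' ne).
have Et' : row_eq E f t' (rcons s x) by apply: sim_row_eq => //; [left | right; exists s, x].
by move=> a Ea; rewrite Est ?Et'.
Qed.

End ObservationTable.

Theorem lemma5 (Sigma : finType) (U D : oword Sigma -> Prop)
    (S : seq (seq Sigma)) (E : list (oword Sigma))
    (f : seq Sigma -> oword Sigma -> bool) :
  weak_det_buchi_recognizable U ->
  omega_regular D -> trivial_rc D ->
  obs_table U D S E f -> obs_reduced S E f -> obs_closed S E f ->
  index_is (sim U D) (size S) ->
  ts_iso (T_Sf S E f) (T_UD U D).
Proof.
move=> _ _ D_trivial tableS reducedS closedS indexS.
exists (cls U D); split=> //=.
- by move=> s _; exists s.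
- by move=> s t Ss St /cls_eqP; apply: (sim_inj_in tableS reducedS).
- move=> C [u ->]; have [s Ss Hsu] := exists_sim_in tableS reducedS indexS u.
  by exists s; split=> //; apply/cls_eqP.
- move=> s x Ss; apply/cls_eqP.
  apply: sim_trans (delta_f_sim tableS reducedS indexS closedS x Ss) _.
  by apply/sim_sym/sim_rcons => //; apply: repr_clsP.
Qed.
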